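(* Let $(V,c)$ be a network satisfying the Yang-type inequality with constant $C_{YT}$. Then for any finite subset $\Omega\subset V$ with $|\Omega|\ge2$ and Dirichlet eigenvalues $\lambda_1\le\lambda_2\le\cdots$, $$\lambda_2-\lambda_{\min}\le\Big(\frac{C_{YT}}{1-\lambda_1}+1\Big)(\lambda_1-\lambda_{\min}).$$
   Context: A network is a pair $(V,c)$ with $V$ countable and $c:V\times V\to[0,\infty)$ symmetric with $\pi(x)=\sum_yc(x,y)<\infty$; $P(x,y)=c(x,y)/\pi(x)$ and $\Delta f(x)=\sum_yP(x,y)(f(x)-f(y))$, a bounded self-adjoint operator on $L^2(V,\pi)$ (inner product $\sum_x\pi(x)f(x)\overline{g(x)}$) with spectrum in $[0,2]$; $\lambda_{\min}$ is the bottom of its spectrum. For finite $\Omega\subset V$, the Dirichlet eigenvalues $\lambda_1\le\cdots\le\lambda_{|\Omega|}$ of $\Omega$ are the eigenvalues (with multiplicity) of the compression $\Delta_\Omega f=\mathbf 1_\Omega\cdot\Delta f$ on functions vanishing outside $\Omega$. The network satisfies the Yang-type inequality with constant $C_{YT}$ if for every finite $\Omega\subset V$ and every $k<|\Omega|$: $\sum_{i=1}^k(\lambda_{k+1}-\lambda_i)^2(1-\lambda_i)\le C_{YT}\sum_{i=1}^k(\lambda_{k+1}-\lambda_i)(\lambda_i-\lambda_{\min})$. *)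

From HB Require Import structures.
From mathcomp Require Import all_boot all_order all_algebra.
From mathcomp Require Import finmap.
From mathcomp Require Import all_classical all_reals all_analysis.
Set Implicit Arguments. Unset Strict Implicit. Unset Printing Implicit Defensive.
Import Order.TTheory GRing.Theory Num.Theory.
Local Open Scope classical_set_scope.
Local Open Scope ring_scope.

Section Network.
Variables (R : realType) (V : countType).
Implicit Types (c : V -> V -> R) (F f : V -> R).

(** A network (V,c): c symmetric, nonnegative, with pi(x) = sum_y c(x,y) finite
    (and positive, so that P = c/pi is defined). *)
Definition is_network c : Prop :=
  [/\ (forall x y, 0 <= c x y), (forall x y, c x y = c y x)
    & (forall x, (0 < \esum_(y in [set: V]) (c x y)%:E)%E /\
                 (\esum_(y in [set: V]) (c x y)%:E < +oo)%E)].

Definition pi c (x : V) : R := fine (\esum_(y in [set: V]) (c x y)%:E).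

Definition Ptr c (x y : V) : R := c x y / pi c x.

Definition csum F : R :=
  fine (\esum_(y in [set: V]) (Num.max (F y) 0)%:E)
  - fine (\esum_(y in [set: V]) (Num.max (- F y) 0)%:E).

Definition in_L2 c f : Prop :=
  (\esum_(x in [set: V]) (pi c x * f x ^+ 2)%:E < +oo)%E.

Definition L2norm2 c f : R := fine (\esum_(x in [set: V]) (pi c x * f x ^+ 2)%:E).

Definition Lap c f (x : V) : R := csum (fun y => Ptr c x y * (f x - f y)).

Definition Lap_form c f : R := csum (fun x => pi c x * Lap c f x * f x).

(** bottom of the spectrum of the bounded self-adjoint operator Delta on
    L^2(V,pi): infimum of its numerical range (Rayleigh quotients). *)
Definition lambda_min c : R :=
  inf [set Lap_form c f / L2norm2 c f | f in [set f | in_L2 c f /\ L2norm2 c f != 0]].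

(** matrix of the compression Delta_Omega = 1_Omega . Delta on functions vanishing
    outside the finite set Omega, in the basis of indicators of the points of Omega
    (entries: Delta 1_{y}(x) = [x = y] - P(x,y), since sum_z P(x,z) = 1). *)
Definition dirichlet_mx c (Om : {fset V}) : 'M[R]_(size (Om : seq V)) :=
  \matrix_(i, j) ((i == j)%:R - Ptr c (tnth (in_tuple (Om : seq V)) i)
                                      (tnth (in_tuple (Om : seq V)) j)).

Definition dirichlet_spectrum c (Om : {fset V}) (s : seq R) : Prop :=
  [/\ size s = size (Om : seq V), sorted <=%R s
    & char_poly (dirichlet_mx c Om) = \prod_(l <- s) ('X - l%:P)].

(** Yang-type inequality with constant C: for every finite Om and every k < |Om|,
    sum_{i=1}^k (l_{k+1}-l_i)^2 (1-l_i) <= C sum_{i=1}^k (l_{k+1}-l_i)(l_i - lmin).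
    (0-based: s`_k = lambda_{k+1}, s`_i = lambda_{i+1}.) *)
Definition yang_type c (C : R) : Prop :=
  forall (Om : {fset V}) (s : seq R), dirichlet_spectrum c Om s ->
  forall k : nat, (k < size (Om : seq V))%N ->
    \sum_(i < k) (s`_k - s`_i) ^+ 2 * (1 - s`_i)
      <= C * \sum_(i < k) (s`_k - s`_i) * (s`_i - lambda_min c).

End Network.

From Pilot Require Import Defs.
From HB Require Import structures.
From mathcomp Require Import all_boot all_order all_algebra.
From mathcomp Require Import finmap.
From mathcomp Require Import all_classical all_reals all_analysis.
From mathcomp Require Import ring lra.
Set Implicit Arguments.
Unset Strict Implicit.
Unset Printing Implicit Defensive.
Import Order.TTheory GRing.Theory Num.Theory.
Local Open Scope ring_scope.

(** The Yang-type inequality at k = 1 reads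
    (l2 - l1)^2 (1 - l1) <= C (l2 - l1) (l1 - lmin), which is the claim once
    lmin <= l1 < 1 is known (the case l1 = 1 forces l2 = 1).  These bounds come
    from the trace of the Dirichlet matrix: sum_i l_i = sum_(x in Om) (1 - P(x,x)),
    and each 1 - P(x,x) lies in [lmin, 1], being the Rayleigh quotient of the
    indicator of x.  Hence l1 <= 1, and l1 < 1 as soon as the spectrum is not
    constant.  A constant spectrum equals its mean, which is >= lmin; otherwise
    the Yang-type inequality at the first k with l_(k+1) > l1 gives l1 >= lmin. *)

Lemma ge0_esumZl (R : realType) (T : choiceType) (S : set T) (a : T -> \bar R) (r : R) :
  0 < r -> (forall i, (0 <= a i)%E) ->
  \esum_(i in S) (r%:E * a i)%E = (r%:E * \esum_(i in S) a i)%E.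
Proof.
move=> r_gt0 a_ge0; rewrite /esum -ereal_sup_pZl //; congr ereal_sup.
apply/seteqP; split => y /=.
- case=> A A_fin <-; exists (\sum_(i \in A) a i)%R; first by exists A.
  by rewrite ge0_mule_fsumr.
- by case=> _ [A A_fin <-] <-; exists A => //; rewrite ge0_mule_fsumr.
Qed.

Lemma esum_supp1 (R : realType) (T : choiceType) (F : T -> R) (x : T) :
  (forall z, z != x -> F z = 0) -> 0 <= F x ->
  \esum_(z in [set: T]) (F z)%:E = (F x)%:E.
Proof.
move=> F_supp Fx_ge0; rewrite (esumID [set x]); last first.
  by move=> z _; case: (eqVneq z x) => [->|/F_supp ->]; rewrite lee_fin.
rewrite setTI esum_set1 ?lee_fin // esum1 ?adde0 // => z [_ /eqP/F_supp ->] //.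
Qed.

Section CountableSums.
Variables (R : realType) (V : countType).
Implicit Types F : V -> R.

Lemma csum_ge0E F : (forall y, 0 <= F y) ->
  csum F = fine (\esum_(y in [set: V]) (F y)%:E).
Proof.
move=> F_ge0; rewrite /csum [X in _ - fine X]esum1 => [|y _]; last first.
  by rewrite (max_idPr _) // oppr_le0.
by rewrite subr0; congr fine; apply: eq_esum => y _; rewrite (max_idPl _).
Qed.

Lemma csum_supp1 F x : (forall z, z != x -> F z = 0) -> csum F = F x.
Proof.
move=> F_supp; rewrite /csum (@esum_supp1 _ _ (fun y => Num.max (F y) 0) x); last first.
- by rewrite le_max lexx orbT.
- by move=> z /F_supp ->; rewrite maxxx.
rewrite (@esum_supp1 _ _ (fun y => Num.max (- F y) 0) x) /=; last first.
- by rewrite le_max lexx orbT.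
- by move=> z /F_supp ->; rewrite oppr0 maxxx.
have [Fx_ge0 | Fx_lt0] := leP 0 (F x).
- by rewrite (max_idPr _) ?subr0 // oppr_le0.
- by rewrite (max_idPl _) ?sub0r ?opprK // oppr_ge0 ltW.
Qed.

End CountableSums.

Definition yang_seq {R : numDomainType} (lm C : R) (s : seq R) : Prop :=
  forall k, (k < size s)%N ->
    \sum_(i < k) (s`_k - s`_i) ^+ 2 * (1 - s`_i)
      <= C * \sum_(i < k) (s`_k - s`_i) * (s`_i - lm).

Lemma sumr_const_seq {R : nmodType} {T : Type} (r : seq T) (a : R) :
  \sum_(x <- r) a = a *+ size r.
Proof. by rewrite big_const_seq count_predT iter_addr_0. Qed.

Section SortedSpectrum.
Variables (R : realFieldType) (lm C : R) (s t : seq R).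
Hypotheses (C_ge0 : 0 <= C) (s_sorted : sorted <=%R s) (s_yang : yang_seq lm C s).
Hypotheses (size_t : size t = size s) (sum_st : \sum_(x <- s) x = \sum_(x <- t) x)
  (t_bounds : {in t, forall x, lm <= x <= 1}).

Lemma head_le_nth i : (i < size s)%N -> s`_0 <= s`_i.
Proof.
move=> lt_i; apply: (le_sorted_leq_nth 0 s_sorted) => //.
by rewrite inE (leq_ltn_trans _ lt_i).
Qed.

Lemma head_le_mem x : x \in s -> s`_0 <= x.
Proof. by move=> /(nthP 0)[i lt_i <-]; exact: head_le_nth. Qed.

Lemma yang_first_jump k : (k < size s)%N -> (0 < k)%N ->
  (forall i, (i < k)%N -> s`_i = s`_0) -> s`_0 < s`_k ->
  (s`_k - s`_0) * (1 - s`_0) <= C * (s`_0 - lm).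
Proof.
move=> lt_k k_gt0 flat jump.
have flatE (F : R -> R) : \sum_(i < k) F s`_i = k%:R * F s`_0.
  transitivity (\sum_(i < k) F s`_0); last by rewrite sumr_const card_ord mulr_natl.
  by apply: eq_bigr => i _; rewrite (flat i (ltn_ord i)).
have := s_yang lt_k.
rewrite (flatE (fun x => (s`_k - x) ^+ 2 * (1 - x))) (flatE (fun x => (s`_k - x) * (x - lm))).
set a := s`_k - s`_0.
have ka_gt0 : 0 < k%:R * a by rewrite mulr_gt0 ?ltr0n ?subr_gt0.
have -> : k%:R * (a ^+ 2 * (1 - s`_0)) = k%:R * a * (a * (1 - s`_0)) by ring.
have -> : C * (k%:R * (a * (s`_0 - lm))) = k%:R * a * (C * (s`_0 - lm)) by ring.
by rewrite ler_pM2l.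
Qed.

Lemma yang_bottom_le_head : s`_0 < 1 -> has (fun x => s`_0 < x) s -> lm <= s`_0.
Proof.
move=> lt_01 jump_s; set k := find (fun x => s`_0 < x) s.
have lt_k : (k < size s)%N by rewrite -has_find.
have jump : s`_0 < s`_k := nth_find 0 jump_s.
have flat i : (i < k)%N -> s`_i = s`_0.
  move=> lt_ik; apply/eqP; rewrite eq_le head_le_nth ?(ltn_trans lt_ik) // andbT.
  by rewrite leNgt (before_find 0 lt_ik).
have k_gt0 : (0 < k)%N by rewrite lt0n; apply: contraTneq jump => ->; rewrite ltxx.
have gap := yang_first_jump lt_k k_gt0 flat jump.
rewrite leNgt; apply/negP => lt_lm.
have : C * (s`_0 - lm) <= 0 by rewrite mulr_ge0_le0 // subr_le0 ltW.
have : 0 < (s`_k - s`_0) * (1 - s`_0) by rewrite mulr_gt0 ?subr_gt0.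
lra.
Qed.

Lemma yang_second_gap : (1 < size s)%N -> lm <= s`_0 ->
  (s`_1 - s`_0) * (1 - s`_0) <= C * (s`_0 - lm).
Proof.
move=> lt_1 lm_le; have := head_le_nth lt_1; rewrite le_eqVlt => /orP[/eqP <-|jump].
  by rewrite subrr mul0r mulr_ge0 ?subr_ge0.
by apply: yang_first_jump => //; case.
Qed.

Lemma yang_gap_bound : (1 < size s)%N -> s`_0 < 1 -> lm <= s`_0 ->
  s`_1 - lm <= (C / (1 - s`_0) + 1) * (s`_0 - lm).
Proof.
move=> lt_1 lt_01 lm_le; have gap := yang_second_gap lt_1 lm_le.
have -> : s`_1 - lm = (s`_1 - s`_0) + (s`_0 - lm) by ring.
by rewrite mulrDl mul1r lerD2r mulrAC ler_pdivlMr ?subr_gt0.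
Qed.

Lemma sum_sub_head_le : \sum_(x <- s) (x - s`_0) <= (size s)%:R * (1 - s`_0).
Proof.
rewrite big_split /= sumrN sumr_const_seq sum_st mulrBr mulr1 mulr_natl lerD2r.
rewrite -size_t -sumr_const_seq !big_seq.
by apply: ler_sum => x /t_bounds /andP[].
Qed.

Lemma head_le1 : (0 < size s)%N -> s`_0 <= 1.
Proof.
move=> n_gt0; have n_pos : 0 < (size s)%:R :> R by rewrite ltr0n.
rewrite -subr_ge0 -(pmulr_rge0 _ n_pos).
apply: le_trans sum_sub_head_le; rewrite big_seq; apply: sumr_ge0 => x.
by move=> /head_le_mem; rewrite subr_ge0.
Qed.

Lemma head_lt1 x : x \in s -> s`_0 < x -> s`_0 < 1.
Proof.
move=> x_in lt_x; rewrite -subr_gt0.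
have n_pos : 0 < (size s)%:R :> R by rewrite ltr0n; case: (s) x_in.
rewrite -(pmulr_rgt0 _ n_pos); apply: lt_le_trans sum_sub_head_le.
rewrite (perm_big _ (perm_to_rem x_in)) big_cons ltr_pwDl ?subr_gt0 //.
rewrite big_seq; apply: sumr_ge0 => y /mem_rem /head_le_mem.
by rewrite subr_ge0.
Qed.

Lemma mean_ge_bottom : (size s)%:R * lm <= \sum_(x <- s) x.
Proof.
rewrite sum_st -size_t mulr_natl -sumr_const_seq !big_seq.
by apply: ler_sum => x /t_bounds /andP[].
Qed.

Lemma bottom_le_head : (0 < size s)%N -> lm <= s`_0.
Proof.
move=> n_gt0; case: (boolP (has (fun x => s`_0 < x) s)) => [jump | /hasPn flat].
  have [x x_in lt_x] := hasP jump.
  exact: yang_bottom_le_head (head_lt1 x_in lt_x) jump.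
have n_pos : 0 < (size s)%:R :> R by rewrite ltr0n.
rewrite -(ler_pM2l n_pos); apply: le_trans mean_ge_bottom _.
rewrite mulr_natl -sumr_const_seq !big_seq; apply: ler_sum => x x_in.
by rewrite leNgt flat.
Qed.

Lemma yang_trace_gap_bound : (1 < size s)%N ->
  s`_1 - lm <= (C / (1 - s`_0) + 1) * (s`_0 - lm).
Proof.
move=> lt_1; have n_gt0 : (0 < size s)%N by apply: ltn_trans lt_1.
have lm_le := bottom_le_head n_gt0.
have [lt_01 | ge_01] := ltP s`_0 1; first exact: yang_gap_bound.
have eq_01 : s`_0 = 1 by apply/eqP; rewrite eq_le head_le1.
have eq_1 : s`_1 = s`_0.
  apply/eqP; rewrite eq_le head_le_nth // andbT leNgt; apply/negP => lt_s1.
  by have := head_lt1 (mem_nth 0 lt_1) lt_s1; rewrite eq_01 ltxx.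
by rewrite eq_1 eq_01 subrr invr0 mulr0 add0r mul1r.
Qed.

End SortedSpectrum.

Section Network.
Variables (R : realType) (V : countType) (c : V -> V -> R).
Hypothesis c_net : is_network c.

Definition kdelta (x : V) : V -> R := fun z => (z == x)%:R.

Lemma pi_EFin x : (Defs.pi c x)%:E = \esum_(y in [set: V]) (c x y)%:E.
Proof.
case: c_net => c_ge0 _ /(_ x) [_ pi_fin]; rewrite fineK // ge0_fin_numE //.
by apply: esum_ge0 => y _; rewrite lee_fin.
Qed.

Lemma pi_gt0 x : 0 < Defs.pi c x.
Proof. by case: c_net => _ _ /(_ x) [pi_gt0 pi_fin]; apply: fine_gt0; rewrite pi_gt0. Qed.

Lemma Ptr_ge0 x y : 0 <= Ptr c x y.
Proof. by case: c_net => c_ge0 _ _; rewrite divr_ge0 ?c_ge0 ?(ltW (pi_gt0 x)). Qed.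

Lemma esum_off_diag x :
  \esum_(y in ~` [set x]) (c x y)%:E = (Defs.pi c x - c x x)%:E.
Proof.
case: c_net => c_ge0 _ _.
have := pi_EFin x; rewrite (esumID [set x]) => [|y _]; last by rewrite lee_fin.
rewrite !setTI esum_set1 ?lee_fin // => pi_split.
by rewrite EFinB pi_split (addeC (c x x)%:E) addeK.
Qed.

Lemma Ptr_diag_le1 x : Ptr c x x <= 1.
Proof.
case: c_net => c_ge0 _ _; have : (0 <= (Defs.pi c x - c x x)%:E)%E.
  by rewrite -esum_off_diag; apply: esum_ge0 => y _; rewrite lee_fin.
by rewrite lee_fin subr_ge0 => c_le; rewrite /Ptr ler_pdivrMr ?pi_gt0 // mul1r.
Qed.

Lemma Lap_kdelta x : Lap c (kdelta x) x = 1 - Ptr c x x.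
Proof.
case: c_net => c_ge0 _ _; have pi_pos := pi_gt0 x.
rewrite /Lap /kdelta eqxx csum_ge0E => [|y]; last first.
  by rewrite mulr_ge0 ?Ptr_ge0 // subr_ge0; case: (y == x).
rewrite (esumID [set x]) => [|y _]; last first.
  by rewrite lee_fin mulr_ge0 ?Ptr_ge0 // subr_ge0; case: (y == x).
rewrite !setTI esum1 => [|y ->]; last by rewrite eqxx subrr mulr0.
rewrite add0e (eq_esum (b := fun y => ((Defs.pi c x)^-1%:E * (c x y)%:E)%E)); last first.
  by move=> y /= /eqP/negbTE ->; rewrite subr0 mulr1 /Ptr mulrC EFinM.
rewrite ge0_esumZl ?invr_gt0 // => [|y]; last by rewrite lee_fin.
by rewrite esum_off_diag -EFinM /= mulrBr mulVf ?gt_eqF // [_^-1 * _]mulrC.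
Qed.

Lemma esum_kdelta_sq x :
  \esum_(z in [set: V]) (Defs.pi c z * kdelta x z ^+ 2)%:E = (Defs.pi c x)%:E.
Proof.
rewrite (@esum_supp1 _ _ (fun z => Defs.pi c z * kdelta x z ^+ 2) x) /kdelta.
- by rewrite eqxx expr1n mulr1.
- by move=> z /negbTE ->; rewrite expr0n mulr0.
- by rewrite eqxx expr1n mulr1 ltW ?pi_gt0.
Qed.

Lemma lambda_min_le_diag x : lambda_min c <= 1 - Ptr c x x.
Proof.
have pi_pos := pi_gt0 x.
have L2_delta : L2norm2 c (kdelta x) = Defs.pi c x by rewrite /L2norm2 esum_kdelta_sq.
have form_delta : Lap_form c (kdelta x) = Defs.pi c x * (1 - Ptr c x x).
  rewrite /Lap_form (csum_supp1 (x := x)) ?Lap_kdelta /kdelta ?eqxx ?mulr1 //.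
  by move=> z /negbTE ->; rewrite mulr0.
rewrite /lambda_min; set S := (X in inf X).
have S_diag : S (1 - Ptr c x x).
  exists (kdelta x); last by rewrite form_delta L2_delta mulrAC mulfV ?mul1r ?gt_eqF.
  by split; [rewrite /in_L2 esum_kdelta_sq ltry | rewrite L2_delta gt_eqF].
have [S_lb | S_nolb] := pselect (has_lbound S); first exact: ge_inf S_lb _ S_diag.
(* [inf] of a set that is not bounded below is 0 by convention. *)
by rewrite inf_out ?subr_ge0 ?Ptr_diag_le1 // => -[_ /S_nolb].
Qed.

End Network.

Lemma mxtrace_char_poly_XsubC (R : comNzRingType) n (A : 'M[R]_n) (s : seq R) :
  char_poly A = \prod_(l <- s) ('X - l%:P) -> \tr A = \sum_(l <- s) l.
Proof.
move=> charA; have := size_char_poly A.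
rewrite charA size_prod_XsubC => -[size_s].
case: n A charA size_s => [A _ | n A charA size_s].
  by case: s => // _; rewrite /mxtrace big_ord0 big_nil.
apply: oppr_inj; rewrite -char_poly_trace // charA -size_s coefPn_prod_XsubC //.
by rewrite size_s.
Qed.

Lemma dirichlet_mx_trace (R : realType) (V : countType) (c : V -> V -> R) (Om : {fset V}) :
  \tr (dirichlet_mx c Om) = \sum_(x <- Om) (1 - Ptr c x x).
Proof. by rewrite (big_tnth _ _ Om) /mxtrace; apply: eq_bigr => i _; rewrite mxE eqxx. Qed.

Theorem corollary5p1 (R : realType) (V : countType) (c : V -> V -> R) (C_YT : R) :
  is_network c -> 0 <= C_YT -> yang_type c C_YT ->
  forall (Om : {fset V}) (s : seq R),
    (2 <= size (Om : seq V))%N -> dirichlet_spectrum c Om s ->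
    s`_1 - lambda_min c <= (C_YT / (1 - s`_0) + 1) * (s`_0 - lambda_min c).
Proof.
move=> c_net C_ge0 yang Om s size_Om spec; case: (spec) => size_s s_sorted char_s.
apply: (yang_trace_gap_bound (t := [seq 1 - Ptr c x x | x <- Om])) => //.
- by move=> k; rewrite size_s; exact: yang spec k.
- by rewrite size_map size_s.
- by rewrite -(mxtrace_char_poly_XsubC char_s) dirichlet_mx_trace big_map.
- by move=> _ /mapP[x _ ->]; rewrite lambda_min_le_diag // gerBl Ptr_ge0.
- by rewrite size_s.
Qed.
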